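(* Suppose that (i) $K:\mathbb R^p\rightrightarrows\mathbb R^n$ is affine, and (ii) $f:\mathbb R^p\times\mathbb R^n\times\mathbb R^n\to\mathbb R^m$ is $C$-concave. Then the function $\mathfrak m=\nu+\mu$ is convex on $\mathbb R^p\times\mathbb R^n$ and the solution mapping $E$ is convex, in the sense that $\operatorname{gph}E$ is a convex subset of $\mathbb R^p\times\mathbb R^n$.
   Context: $C\subset\mathbb R^m$ nontrivial closed convex pointed cone; $K$ has closed graph and nonempty values (standing assumption). VEP($\xi$): find $x\in K(\xi)$ with $f(\xi,x,z)\in C$ for all $z\in K(\xi)$; $E(\xi)$ its solution set. $\nu(\xi,x)=\sup_{z\in K(\xi)}\operatorname{dist}(f(\xi,x,z),C)$, $\mu(\xi,x)=\operatorname{dist}(x,K(\xi))$, $\mathfrak m=\nu+\mu$. $g$ is $C$-concave if $g(tx_1+(1-t)x_2)-tg(x_1)-(1-t)g(x_2)\in C$ for all $x_1,x_2$, $t\in[0,1]$. A set-valued map $F$ is affine if $F(tx_1+(1-t)x_2)=tF(x_1)+(1-t)F(x_2)$ for all $x_1,x_2$, $t\in[0,1]$. *)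

From HB Require Import structures.
From mathcomp Require Import all_boot all_order all_algebra.
From mathcomp Require Import all_classical all_reals all_analysis.
Set Implicit Arguments. Unset Strict Implicit. Unset Printing Implicit Defensive.
Import Order.TTheory GRing.Theory Num.Theory.
Import numFieldNormedType.Exports.
Local Open Scope classical_set_scope.
Local Open Scope ring_scope.

Definition enorm {R : realType} {k : nat} (v : 'rV[R]_k) : R :=
  Num.sqrt (\sum_(i < k) v ord0 i ^+ 2).

(* dist(y, S) = inf_{s in S} |y - s|, extended-real valued (+oo if S empty) *)
Definition edist {R : realType} {k : nat} (y : 'rV[R]_k) (S : set 'rV[R]_k) : \bar R :=
  ereal_inf [set (enorm (y - s))%:E | s in S].

Definition is_cone {R : realType} {m : nat} (C : set 'rV[R]_m) : Prop :=
  C 0 /\ forall (t : R) (c : 'rV[R]_m), 0 <= t -> C c -> C (t *: c).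
Definition convex_set_rV {R : realType} {m : nat} (C : set 'rV[R]_m) : Prop :=
  forall (c1 c2 : 'rV[R]_m) (t : R), C c1 -> C c2 -> 0 <= t <= 1 -> C (t *: c1 + (1 - t) *: c2).
Definition pointed {R : realType} {m : nat} (C : set 'rV[R]_m) : Prop :=
  forall c, C c -> C (- c) -> c = 0.
Definition nontrivial {R : realType} {m : nat} (C : set 'rV[R]_m) : Prop :=
  exists c, C c /\ c <> 0.

Definition C_concave {R : realType} {p n m : nat} (C : set 'rV[R]_m)
  (f : 'rV[R]_p -> 'rV[R]_n -> 'rV[R]_n -> 'rV[R]_m) : Prop :=
  forall (xi1 xi2 : 'rV[R]_p) (x1 z1 x2 z2 : 'rV[R]_n) (t : R), 0 <= t <= 1 ->
    C (f (t *: xi1 + (1 - t) *: xi2) (t *: x1 + (1 - t) *: x2) (t *: z1 + (1 - t) *: z2)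
       - t *: f xi1 x1 z1 - (1 - t) *: f xi2 x2 z2).

Definition affine_svm {R : realType} {p n : nat} (K : 'rV[R]_p -> set 'rV[R]_n) : Prop :=
  forall (xi1 xi2 : 'rV[R]_p) (t : R), 0 <= t <= 1 ->
    K (t *: xi1 + (1 - t) *: xi2) =
    [set t *: a + (1 - t) *: b | a in K xi1 & b in K xi2].

Definition gph {R : realType} {p n : nat} (F : 'rV[R]_p -> set 'rV[R]_n)
  : set ('rV[R]_p * 'rV[R]_n) := [set q | F q.1 q.2].

Definition nu {R : realType} {p n m : nat} (C : set 'rV[R]_m)
  (K : 'rV[R]_p -> set 'rV[R]_n) (f : 'rV[R]_p -> 'rV[R]_n -> 'rV[R]_n -> 'rV[R]_m)
  (xi : 'rV[R]_p) (x : 'rV[R]_n) : \bar R :=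
  ereal_sup [set edist (f xi x z) C | z in K xi].
Definition mu {R : realType} {p n : nat} (K : 'rV[R]_p -> set 'rV[R]_n)
  (xi : 'rV[R]_p) (x : 'rV[R]_n) : \bar R := edist x (K xi).
Definition mfrak {R : realType} {p n m : nat} (C : set 'rV[R]_m)
  (K : 'rV[R]_p -> set 'rV[R]_n) (f : 'rV[R]_p -> 'rV[R]_n -> 'rV[R]_n -> 'rV[R]_m)
  (xi : 'rV[R]_p) (x : 'rV[R]_n) : \bar R := (nu C K f xi x + mu K xi x)%E.

Definition Esol {R : realType} {p n m : nat} (C : set 'rV[R]_m)
  (K : 'rV[R]_p -> set 'rV[R]_n) (f : 'rV[R]_p -> 'rV[R]_n -> 'rV[R]_n -> 'rV[R]_m)
  (xi : 'rV[R]_p) : set 'rV[R]_n :=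
  [set x | K xi x /\ forall z, K xi z -> C (f xi x z)].

(* convexity of an extended-real function on R^p x R^n (convention 0 * +oo = 0) *)
Definition convex_efun2 {R : realType} {p n : nat} (g : 'rV[R]_p -> 'rV[R]_n -> \bar R) : Prop :=
  forall (xi1 xi2 : 'rV[R]_p) (x1 x2 : 'rV[R]_n) (t : R), 0 <= t <= 1 ->
    (g (t *: xi1 + (1 - t) *: xi2)%R (t *: x1 + (1 - t) *: x2)%R
     <= t%:E * g xi1 x1 + (1 - t)%R%:E * g xi2 x2)%E.

Definition convex_set2 {R : realType} {p n : nat} (S : set ('rV[R]_p * 'rV[R]_n)) : Prop :=
  forall (q1 q2 : 'rV[R]_p * 'rV[R]_n) (t : R), S q1 -> S q2 -> 0 <= t <= 1 ->
    S (t *: q1.1 + (1 - t) *: q2.1, t *: q1.2 + (1 - t) *: q2.2).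

(* Since K is affine, K at a convex combination of parameters is the Minkowski
   combination of the two values; this gives convexity of mu = dist(x, K xi)
   and, with C-concavity, of nu = sup_z dist(f(xi, x, z), C).  Both are
   nonnegative, so their sum is convex, and the same decomposition shows that
   convex combinations of solutions are solutions. *)
From Pilot Require Import Defs.
From mathcomp Require Import all_boot all_order all_algebra.
From mathcomp Require Import all_classical all_reals all_analysis.
From mathcomp Require Import ring lra.
(* Re-imported so that [edist] denotes the point-to-set distance of Defs
   rather than the extended distance of mathcomp-analysis. *)
From Pilot Require Import Defs.
Import Order.TTheory GRing.Theory Num.Theory.
Local Open Scope classical_set_scope.
Local Open Scope ring_scope.

Set Implicit Arguments. Unset Strict Implicit.

Section EuclideanNorm.
Variable R : realType.

(* Cauchy-Schwarz for finite sums, from the nonnegativity of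
   sum_i (D a_i - B b_i)^2 = D (A D - B^2), where A, B, D are the three sums. *)
Lemma sum_CauchySchwarz (k : nat) (a b : 'I_k -> R) :
  (\sum_i a i * b i) ^+ 2 <= (\sum_i a i ^+ 2) * (\sum_i b i ^+ 2).
Proof.
set A := \sum_i a i ^+ 2; set B := \sum_i a i * b i; set D := \sum_i b i ^+ 2.
have D_ge0 : 0 <= D by apply: sumr_ge0 => i _; apply: sqr_ge0.
have discr_ge0 : 0 <= D * (A * D - B ^+ 2).
  have : 0 <= \sum_i (D * a i - B * b i) ^+ 2.
    by apply: sumr_ge0 => i _; apply: sqr_ge0.
  have -> : \sum_i (D * a i - B * b i) ^+ 2 =
      \sum_i (D ^+ 2 * a i ^+ 2) - \sum_i (2 * D * B * (a i * b i))
      + \sum_i (B ^+ 2 * b i ^+ 2).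
    by rewrite -sumrB -big_split /=; apply: eq_bigr => i _; ring.
  by rewrite -!mulr_sumr -/A -/B -/D; congr (_ <= _); ring.
have [D_gt0 | D_le0] := ltrP 0 D.
  by move: discr_ge0; rewrite pmulr_rge0 // subr_ge0.
have D0 : D = 0 by apply/eqP; rewrite eq_le D_le0 D_ge0.
have b0 i : b i = 0.
  apply/eqP; rewrite -sqrf_eq0; apply/eqP.
  exact: (psumr_eq0P (fun j _ => sqr_ge0 (b j)) D0).
have -> : B = 0 by rewrite /B big1 // => i _; rewrite b0 mulr0.
by rewrite D0 expr0n /= mulr0.
Qed.

Lemma enorm_ge0 k (v : 'rV[R]_k) : 0 <= enorm v.
Proof. exact: sqrtr_ge0. Qed.

Lemma enormZ k (t : R) (v : 'rV[R]_k) : enorm (t *: v) = `|t| * enorm v.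
Proof.
rewrite /enorm; under eq_bigr do rewrite mxE exprMn.
by rewrite -mulr_sumr sqrtrM ?sqr_ge0 // sqrtr_sqr.
Qed.

(* Triangle inequality: |a + b|^2 = A + 2B + D <= (sqrt A + sqrt D)^2. *)
Lemma enormD k (a b : 'rV[R]_k) : enorm (a + b) <= enorm a + enorm b.
Proof.
rewrite /enorm.
set A := \sum_i a ord0 i ^+ 2; set B := \sum_i a ord0 i * b ord0 i.
set D := \sum_i b ord0 i ^+ 2.
have A_ge0 : 0 <= A by apply: sumr_ge0 => i _; apply: sqr_ge0.
have D_ge0 : 0 <= D by apply: sumr_ge0 => i _; apply: sqr_ge0.
have -> : \sum_i (a + b) ord0 i ^+ 2 = A + 2 * B + D.
  rewrite /A /B /D mulr_sumr -!big_split /=.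
  by apply: eq_bigr => i _; rewrite mxE; ring.
have B_le : B <= Num.sqrt A * Num.sqrt D.
  rewrite -sqrtrM //; apply: le_trans (ler_norm B) _.
  by rewrite -sqrtr_sqr; apply: ler_wsqrtr; apply: sum_CauchySchwarz.
rewrite -[leRHS]ger0_norm ?addr_ge0 ?sqrtr_ge0 // -sqrtr_sqr.
by apply: ler_wsqrtr; rewrite sqrrD !sqr_sqrtr //; lra.
Qed.

Lemma enorm_convex k (t : R) (a b : 'rV[R]_k) : 0 <= t <= 1 ->
  enorm (t *: a + (1 - t) *: b) <= t * enorm a + (1 - t) * enorm b.
Proof.
move=> /andP[t_ge0 t_le1]; apply: le_trans (enormD _ _) _.
by rewrite !enormZ !ger0_norm // subr_ge0.
Qed.

End EuclideanNorm.

Section Distance.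
Variables (R : realType) (k : nat).
Implicit Types (y : 'rV[R]_k) (S : set 'rV[R]_k).

Lemma edist_ge0 y S : (0 <= edist y S)%E.
Proof. by apply: le_ereal_inf_tmp => _ [s _ <-]; rewrite lee_fin enorm_ge0. Qed.

Lemma edist_le y S s : S s -> (edist y S <= (enorm (y - s))%:E)%E.
Proof. by move=> Ss; apply: ereal_inf_lbound; exists s. Qed.

Lemma edist_fin_num y S : S !=set0 -> edist y S \is a fin_num.
Proof.
move=> [s Ss]; rewrite ge0_fin_numE ?edist_ge0 //.
exact: le_lt_trans (edist_le y Ss) (ltry _).
Qed.

Lemma edist_convex y y1 y2 S S1 S2 (t : R) :
  0 <= t <= 1 -> S1 !=set0 -> S2 !=set0 ->
  (forall s1 s2, S1 s1 -> S2 s2 ->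
     exists2 s, S s & y - s = t *: (y1 - s1) + (1 - t) *: (y2 - s2)) ->
  (edist y S <= t%:E * edist y1 S1 + (1 - t)%:E * edist y2 S2)%E.
Proof.
move=> t01 S1_ne S2_ne transport; have /andP[t_ge0 t_le1] := t01.
have d1_fin := edist_fin_num y1 S1_ne; have d2_fin := edist_fin_num y2 S2_ne.
rewrite -(fineK d1_fin) -(fineK d2_fin); apply/lee_addgt0Pr => e e_gt0.
have [_ [s1 S1s1 <-] near1] := lb_ereal_inf_adherent e_gt0 d1_fin.
have [_ [s2 S2s2 <-] near2] := lb_ereal_inf_adherent e_gt0 d2_fin.
rewrite -/(edist y1 S1) -(fineK d1_fin) -EFinD lte_fin in near1.
rewrite -/(edist y2 S2) -(fineK d2_fin) -EFinD lte_fin in near2.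
have [s Ss ys_eq] := transport s1 s2 S1s1 S2s2.
apply: le_trans (edist_le y Ss) _; rewrite ys_eq -!EFinM -!EFinD lee_fin.
apply: le_trans (enorm_convex _ _ t01) _.
have := ler_wpM2l t_ge0 (ltW near1).
have := ler_wpM2l (_ : 0 <= 1 - t) (ltW near2); rewrite subr_ge0 => /(_ t_le1).
by move=> near2_scaled near1_scaled; lra.
Qed.

End Distance.

(* A convex cone is closed under addition: a + b = 2 ((1/2) a + (1/2) b). *)
Lemma cone_addr_closed (R : realType) (m : nat) (C : set 'rV[R]_m) (a b : 'rV[R]_m) :
  is_cone C -> convex_set_rV C -> C a -> C b -> C (a + b).
Proof.
move=> [_ C_scale] C_conv Ca Cb.
have half01 : (0 : R) <= (2^-1 : R) <= 1 by lra.
have -> : a + b = 2 *: (2^-1 *: a + (1 - 2^-1) *: b).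
  by apply/rowP => i; rewrite !mxE; field.
by apply: C_scale; [lra | apply: C_conv].
Qed.

(* The sum of two nonnegative convex extended-real functions is convex; the
   sign condition lets the factors t and 1 - t distribute over the sum. *)
Lemma convex_efun2D (R : realType) (p n : nat) (g h : 'rV[R]_p -> 'rV[R]_n -> \bar R) :
  (forall xi x, 0 <= g xi x)%E -> (forall xi x, 0 <= h xi x)%E ->
  convex_efun2 g -> convex_efun2 h ->
  convex_efun2 (fun xi x => g xi x + h xi x)%E.
Proof.
move=> g_ge0 h_ge0 g_conv h_conv xi1 xi2 x1 x2 t t01.
apply: le_trans (leeD (g_conv _ _ _ _ _ t01) (h_conv _ _ _ _ _ t01)) _.
by rewrite !ge0_muleDr // addeACA.
Qed.

Section VEP.
Variables (R : realType) (p n m : nat).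
Variables (C : set 'rV[R]_m) (K : 'rV[R]_p -> set 'rV[R]_n).
Variable f : 'rV[R]_p -> 'rV[R]_n -> 'rV[R]_n -> 'rV[R]_m.
Hypotheses (C_cone : is_cone C) (C_conv : convex_set_rV C).
Hypotheses (K_ne : forall xi, K xi !=set0) (K_aff : affine_svm K).
Hypothesis f_conc : C_concave C f.

Local Notation comb t u v := (t *: u + (1 - t) *: v).

Lemma C_concave_decomp xi1 xi2 x1 x2 z1 z2 (t : R) : 0 <= t <= 1 ->
  exists2 c, C c &
    f (comb t xi1 xi2) (comb t x1 x2) (comb t z1 z2)
    = c + comb t (f xi1 x1 z1) (f xi2 x2 z2).
Proof.
move=> t01; have residual_in_C := f_conc xi1 xi2 x1 z1 x2 z2 t01.
by eexists; first exact: residual_in_C; rewrite -[_ - _ - _]addrA -opprD subrK.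
Qed.

Lemma nu_ge0 xi x : (0 <= nu C K f xi x)%E.
Proof.
have [z Kz] := K_ne xi.
apply: le_trans (edist_ge0 (f xi x z) C) _.
by apply: ereal_sup_ubound; exists z.
Qed.

Lemma mu_convex : convex_efun2 (mu K).
Proof.
move=> xi1 xi2 x1 x2 t t01; rewrite /mu K_aff //.
apply: edist_convex => // s1 s2 K1s1 K2s2.
exists (comb t s1 s2); first by exists s1 => //; exists s2.
by apply/rowP => i; rewrite !mxE; ring.
Qed.

(* Each z in K at the combination splits as comb t z1 z2; the residual of
   C-concavity transports points of C to points of C as edist_convex needs. *)
Lemma nu_convex : convex_efun2 (nu C K f).
Proof.
move=> xi1 xi2 x1 x2 t t01; have /andP[t_ge0 t_le1] := t01.
have C_ne : C !=set0 by exists 0; case: C_cone.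
apply: ge_ereal_sup => _ [z + <-]; rewrite K_aff // => -[z1 K1z1 [z2 K2z2 <-]].
have [c Cc ->] := C_concave_decomp xi1 xi2 x1 x2 z1 z2 t01.
apply: le_trans (edist_convex (y1 := f xi1 x1 z1) (y2 := f xi2 x2 z2)
                   t01 C_ne C_ne _) _.
  move=> s1 s2 Cs1 Cs2; exists (c + comb t s1 s2).
    by apply: cone_addr_closed => //; apply: C_conv.
  by apply/rowP => i; rewrite !mxE; ring.
by apply: leeD; apply: lee_wpmul2l; rewrite ?lee_fin ?subr_ge0 //;
  apply: ereal_sup_ubound; [exists z1 | exists z2].
Qed.

Lemma mfrak_convex : convex_efun2 (mfrak C K f).
Proof. exact: convex_efun2D nu_ge0 (fun _ _ => edist_ge0 _ _) nu_convex mu_convex. Qed.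

(* A combination of solutions is feasible since K is affine, and every
   value f(.., comb t z1 z2) is an element of C plus a combination of
   elements of C. *)
Lemma gph_Esol_convex : convex_set2 (gph (Esol C K f)).
Proof.
move=> [xi1 x1] [xi2 x2] t [/= K1x1 sol1] [/= K2x2 sol2] t01; split => /=.
  by rewrite K_aff //; exists x1 => //; exists x2.
move=> z; rewrite K_aff // => -[z1 K1z1 [z2 K2z2 <-]].
have [c Cc ->] := C_concave_decomp xi1 xi2 x1 x2 z1 z2 t01.
by apply: cone_addr_closed => //; apply: C_conv => //; [apply: sol1 | apply: sol2].
Qed.

End VEP.

Theorem mainTheorem6 (R : realType) (p n m : nat)
  (C : set 'rV[R]_m) (K : 'rV[R]_p -> set 'rV[R]_n)
  (f : 'rV[R]_p -> 'rV[R]_n -> 'rV[R]_n -> 'rV[R]_m) :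
  @closed ('rV[R]_m : normedModType R) C ->
  is_cone C -> convex_set_rV C -> pointed C -> nontrivial C ->
  @closed (('rV[R]_p : normedModType R) * ('rV[R]_n : normedModType R))%type (gph K) ->
  (forall xi, K xi !=set0) ->
  affine_svm K -> C_concave C f ->
  convex_efun2 (mfrak C K f) /\ convex_set2 (gph (Esol C K f)).
Proof.
move=> _ C_cone C_conv _ _ _ K_ne K_aff f_conc; split.
- exact: mfrak_convex.
- exact: gph_Esol_convex.
Qed.
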